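(* For every integer $d\ge 2$, $$2^{-d}+\frac{(2^d-1)\left(2^d-2+\sqrt{(2^d-2)^2+2^{d+3}d}\right)}{2^{2d+1}d}>\frac{3}{2^d+2}.$$ *)

From Stdlib Require Import Reals Lra Lia.

(** With [N = 2^d] and [S = sqrt ((N - 2)^2 + 8 N d)], the left side minus
    [3 / (N + 2)] equals [((N - 2 + S)(N + 2) - 4 N d)(N - 1) / (2 N^2 d (N + 2))],
    so it suffices that [S (N + 2) > 4 N d - (N - 2)(N + 2)].  Squaring, the
    gap is [16 N^2 d (N + 2 - d)], which is positive because [d < 2^d]. *)

From Stdlib Require Import Reals Lra Lia.
Open Scope R_scope.

Lemma lt_sqrt_of_sqr_lt (x y : R) : x ^ 2 < y -> x < sqrt y.
Proof.
  intros Hxy.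
  destruct (Rlt_or_le x 0) as [Hx | Hx].
  - pose proof (sqrt_pos y); lra.
  - rewrite <- (sqrt_pow2 x Hx).
    apply sqrt_lt_1; nra.
Qed.

Lemma sqrt_term_bound (N D : R) :
  0 < N -> 0 < D < N + 2 ->
  4 * N * D < (N - 2 + sqrt ((N - 2) ^ 2 + 8 * N * D)) * (N + 2).
Proof.
  intros HN [HD0 HDN].
  set (x := (4 * N * D - (N - 2) * (N + 2)) / (N + 2)).
  assert (Hx : x * (N + 2) = 4 * N * D - (N - 2) * (N + 2))
    by (unfold x; field; lra).
  assert (Hgap : ((N - 2) ^ 2 + 8 * N * D) * (N + 2) ^ 2 - x ^ 2 * (N + 2) ^ 2
                 = 16 * N ^ 2 * D * (N + 2 - D)).
  { replace (x ^ 2 * (N + 2) ^ 2) with ((x * (N + 2)) ^ 2) by ring.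
    rewrite Hx; ring. }
  assert (Hsqr : x ^ 2 < (N - 2) ^ 2 + 8 * N * D).
  { assert (0 < 16 * N ^ 2 * D * (N + 2 - D))
      by (repeat apply Rmult_lt_0_compat; nra).
    apply (Rmult_lt_reg_r ((N + 2) ^ 2)); nra. }
  pose proof (lt_sqrt_of_sqr_lt _ _ Hsqr).
  nra.
Qed.

Lemma proposition2_real (N D : R) :
  1 < N -> 0 < D < N + 2 ->
  / N + (N - 1) * (N - 2 + sqrt ((N - 2) ^ 2 + 8 * N * D)) / (2 * N ^ 2 * D)
  > 3 / (N + 2).
Proof.
  intros HN HD.
  set (S := sqrt ((N - 2) ^ 2 + 8 * N * D)).
  assert (Hkey : 4 * N * D < (N - 2 + S) * (N + 2))
    by (apply sqrt_term_bound; lra).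
  apply Rminus_gt.
  replace (/ N + (N - 1) * (N - 2 + S) / (2 * N ^ 2 * D) - 3 / (N + 2))
    with (((N - 2 + S) * (N + 2) - 4 * N * D) * (N - 1)
          / (2 * N ^ 2 * D * (N + 2)))
    by (field; lra).
  apply Rdiv_lt_0_compat.
  - apply Rmult_lt_0_compat; lra.
  - repeat apply Rmult_lt_0_compat; nra.
Qed.

Theorem proposition2 (d : nat) (hd : (2 <= d)%nat) :
  / 2 ^ d
  + (2 ^ d - 1) * (2 ^ d - 2 + sqrt ((2 ^ d - 2) ^ 2 + 2 ^ (d + 3) * INR d))
    / (2 ^ (2 * d + 1) * INR d)
  > 3 / (2 ^ d + 2).
Proof.
  assert (Hd_lt : INR d < 2 ^ d).
  { replace 2 with (INR 2) by (simpl; lra).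
    rewrite <- pow_INR.
    apply lt_INR, Nat.pow_gt_lin_r; lia. }
  assert (Hd_pos : 0 < INR d) by (apply lt_0_INR; lia).
  assert (HN : 1 < 2 ^ d) by (apply Rlt_pow_R1; [lra | lia]).
  replace (2 ^ (d + 3)) with (8 * 2 ^ d) by (rewrite pow_add; simpl; ring).
  replace (2 ^ (2 * d + 1)) with (2 * (2 ^ d) ^ 2)
    by (rewrite pow_add, Nat.mul_comm, pow_mult; simpl; ring).
  apply proposition2_real; lra.
Qed.
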